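(* For any non-null loop $l$ in $\mathbb{Z}^d$, $\mathrm{area}(l)$ is at most the minimum number of deformation steps in a vanishing trajectory starting from $l$; that is, every vanishing trajectory starting at $l$ contains at least $\mathrm{area}(l)$ deformation steps.
   Context: Lattice, paths and loops. $E$ is the set of directed nearest-neighbour edges of $\mathbb{Z}^d$ ($d\ge2$); $e$ goes from $u(e)$ to $v(e)$, $e^{-1}$ is the reversed edge; $e$ is positively oriented if $v(e)$ is lexicographically larger than $u(e)$, and $E^+$ is the set of such edges. Paths, closed paths (the null path included), cycles (classes of closed paths under cyclic rotation); each cycle has a first edge fixed by an arbitrary rule and ''location $k$'' is its $k$-th edge. A closed path $e_1\cdots e_n$ has a backtrack at $i\le n-1$ if $e_{i+1}=e_i^{-1}$ and at $n$ if $e_1=e_n^{-1}$; successively erasing backtracks (removing both edges) until none remain gives a well-defined cycle $[\cdot]$. A loop is a cycle without backtracks (including the null loop). A plaquette is a nonbacktracking closed path of length 4; $\mathcal{P}^+$ is the set of plaquettes $e_1e_2e_3e_4$ with $u(e_1)$ lexicographically smallest and $v(e_1)$ second smallest among its vertices. Loop sequences: finite sequences of loops modulo inserting/deleting null loops, with minimal representations without null loops. Operations and trajectories. For non-null loops $l,l'$ and locations $x,y$: same edge $e$: $l=aeb$, $l'=ced$, $l\oplus_{x,y}l'=[aedceb]$, $l\ominus_{x,y}l'=[ac^{-1}d^{-1}b]$; $e$ vs $e^{-1}$: $l=aeb$, $l'=ce^{-1}d$, $l\oplus_{x,y}l'=[aec^{-1}d^{-1}eb]$, $l\ominus_{x,y}l'=[adcb]$.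 Deformations of $l$: $l\oplus_{x,y}p$, $l\ominus_{x,y}p$ for plaquettes $p$ containing the edge at location $x$ of $l$ or its inverse. Splittings at distinct locations $x,y$: $l=aebec$ (displayed $e$'s at $x,y$ respectively) gives $([aec],[be])$; $l=aebe^{-1}c$ gives $([ac],[b])$. A deformation (splitting) of a loop sequence replaces one component by a deformation (by the two loops of a splitting) of it. A trajectory is a sequence of loop sequences each obtained from the previous by a deformation or a splitting; a vanishing trajectory is finite and ends at the null loop sequence. Area. $1$-chains are elements of the free $\mathbb{Z}$-module over $E^+$, lattice surfaces elements of the free $\mathbb{Z}$-module over $\mathcal{P}^+$. Each $p\in\mathcal{P}^+$ is uniquely $e_1e_2e_3^{-1}e_4^{-1}$ with $e_i\in E^+$, and $\delta(p)=e_1+e_2-e_3-e_4$ extended linearly. For $e\in E$, $r(e)=e$ if $e\in E^+$ and $r(e)=-e^{-1}$ otherwise; $r(l)=\sum_i r(e_i)$ for $l=e_1\cdots e_n$. $\mathrm{area}(\sum n_pp)=\sum|n_p|$ and $\mathrm{area}(l)$ is the minimal area of a lattice surface $x$ with $\delta(x)=r(l)$. *)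

From Stdlib Require Import ClassicalEpsilon.
From mathcomp Require Import all_boot all_order all_algebra.
Set Implicit Arguments. Unset Strict Implicit. Unset Printing Implicit Defensive.
Import Order.TTheory GRing.Theory Num.Theory.

Notation vertex d := {ffun 'I_d -> int}.
(* A directed nearest-neighbour edge (u, i, s) goes from u to u + (+/-1) e_i,
   with sign + iff s = true.  This is in bijection with E. *)
Notation edge d := (vertex d * 'I_d * bool)%type.

Section Lattice.
Variable d : nat.

Definition esrc (e : edge d) : vertex d := e.1.1.
Definition edir (e : edge d) : 'I_d := e.1.2.
Definition esgn (e : edge d) : bool := e.2.
Definition etgt (e : edge d) : vertex d :=
  [ffun j => (esrc e j + (if j == edir e then (if esgn e then 1 else -1) else 0))%R].
Definition einv (e : edge d) : edge d := (etgt e, edir e, ~~ esgn e).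

Definition lex_lt (u w : vertex d) : bool :=
  [exists i : 'I_d, [forall j : 'I_d, (j < i)%N ==> (u j == w j)] && (u i < w i)%R].

Definition positive (e : edge d) : bool := lex_lt (esrc e) (etgt e).

Definition adj (e f : edge d) : bool := etgt e == esrc f.
Definition closed_path (p : seq (edge d)) : bool := cycle adj p.
Definition no_backtrack (p : seq (edge d)) : bool := cycle (fun e f => f != einv e) p.
(* a loop (given by a representative closed path of its cycle) *)
Definition is_loop (p : seq (edge d)) : bool := closed_path p && no_backtrack p.

Definition pinv (p : seq (edge d)) : seq (edge d) := rev (map einv p).

(* erasing one backtrack (at i <= n-1, or at n) *)
Definition erase_step (c c' : seq (edge d)) : Prop :=
  (exists a b e, c = a ++ e :: einv e :: b /\ c' = a ++ b) \/
  (exists e m, c = e :: rcons m (einv e) /\ c' = m).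

Inductive erases : seq (edge d) -> seq (edge d) -> Prop :=
| erases_refl c : erases c c
| erases_step c c' c'' : erase_step c c' -> erases c' c'' -> erases c c''.

Definition red (c m : seq (edge d)) : Prop :=
  exists m0, erases c m0 /\ no_backtrack m0 /\ exists k, m = rot k m0.

(* l (+)_{x,y} l' ; the locations x,y are those of the displayed e's *)
Definition oplus_res (l l' m : seq (edge d)) : Prop :=
  exists a b c dd e, l = a ++ e :: b /\
   ((l' = c ++ e :: dd /\ red (a ++ e :: dd ++ c ++ e :: b) m) \/
    (l' = c ++ einv e :: dd /\ red (a ++ e :: pinv c ++ pinv dd ++ e :: b) m)).

Definition ominus_res (l l' m : seq (edge d)) : Prop :=
  exists a b c dd e, l = a ++ e :: b /\
   ((l' = c ++ e :: dd /\ red (a ++ pinv c ++ pinv dd ++ b) m) \/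
    (l' = c ++ einv e :: dd /\ red (a ++ dd ++ c ++ b) m)).

Definition is_plaquette (p : seq (edge d)) : bool :=
  (size p == 4) && closed_path p && no_backtrack p.

Definition deform (l m : seq (edge d)) : Prop :=
  exists p, is_plaquette p /\ (oplus_res l p m \/ ominus_res l p m).

Definition splitting (l m1 m2 : seq (edge d)) : Prop :=
  exists a b c e,
   (l = a ++ e :: b ++ e :: c /\ red (a ++ e :: c) m1 /\ red (b ++ [:: e]) m2) \/
   (l = a ++ e :: b ++ einv e :: c /\ red (a ++ c) m1 /\ red b m2).

(* loop sequences in minimal representation (no null loops) *)
Definition nn (m : seq (edge d)) : seq (seq (edge d)) :=
  if m is [::] then [::] else [:: m].

Definition lseq_deform (s t : seq (seq (edge d))) : Prop :=
  exists s1 s2 l m, s = s1 ++ l :: s2 /\ deform l m /\ t = s1 ++ nn m ++ s2.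

Definition lseq_split (s t : seq (seq (edge d))) : Prop :=
  exists s1 s2 l m1 m2, s = s1 ++ l :: s2 /\ splitting l m1 m2 /\
    t = s1 ++ nn m1 ++ nn m2 ++ s2.

(* a trajectory from s: labelled steps (true = deformation, false = splitting) *)
Fixpoint trajectory (s : seq (seq (edge d))) (steps : seq (bool * seq (seq (edge d)))) : Prop :=
  match steps with
  | [::] => True
  | (b, t) :: rest => (if b then lseq_deform s t else lseq_split s t) /\ trajectory t rest
  end.

Definition vanishing (s : seq (seq (edge d))) (steps : seq (bool * seq (seq (edge d)))) : Prop :=
  trajectory s steps /\ last s (map snd steps) = [::].

Definition num_deformations (steps : seq (bool * seq (seq (edge d)))) : nat :=
  count (fun st => st.1) steps.

Definition in_Pplus (p : seq (edge d)) : Prop :=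
  is_plaquette p /\
  exists e1 e2 e3 e4, p = [:: e1; e2; e3; e4] /\
   let V := [:: esrc e1; esrc e2; esrc e3; esrc e4] in
   (forall w, w \in V -> w != esrc e1 -> lex_lt (esrc e1) w) /\
   (forall w, w \in V -> w != esrc e1 -> w != etgt e1 -> lex_lt (etgt e1) w).

(* 1-chains, as coefficient functions on edges (supported on E^+) *)
Definition ind (e : edge d) : edge d -> int := fun f => Posz (f == e).

Definition r_edge (e : edge d) : edge d -> int :=
  fun f => if positive e then ind e f else (- ind (einv e) f)%R.
Definition r_path (l : seq (edge d)) : edge d -> int :=
  fun f => (\sum_(e <- l) r_edge e f)%R.

(* delta(p) for p = e1 e2 e3^{-1} e4^{-1} in P^+, i.e. p = [f1;f2;f3;f4]
   with e1 = f1, e2 = f2, e3 = f3^{-1}, e4 = f4^{-1} *)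
Definition delta_plaq (p : seq (edge d)) : edge d -> int :=
  fun f => match p with
           | [:: f1; f2; f3; f4] =>
               (ind f1 f + ind f2 f - ind (einv f3) f - ind (einv f4) f)%R
           | _ => 0%R
           end.

(* lattice surfaces: finite formal Z-combinations of plaquettes in P^+,
   written as a list of (plaquette, coefficient) with distinct plaquettes *)
Definition surface_wf (x : seq (seq (edge d) * int)) : Prop :=
  uniq (map fst x) /\ forall pn, pn \in x -> in_Pplus pn.1.

Definition delta (x : seq (seq (edge d) * int)) : edge d -> int :=
  fun f => (\sum_(pn <- x) pn.2 * delta_plaq pn.1 f)%R.

Definition surf_area (x : seq (seq (edge d) * int)) : nat :=
  \sum_(pn <- x) `|pn.2|%N.

Definition has_surface_of_area (l : seq (edge d)) (n : nat) : Prop :=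
  exists x, surface_wf x /\ (forall f, delta x f = r_path l f) /\ surf_area x = n.

Definition area_pred (l : seq (edge d)) : pred nat :=
  fun n => if excluded_middle_informative (has_surface_of_area l n) then true else false.

(* area(l) = minimal area of a lattice surface x with delta(x) = r(l)
   (set to 0 if no such surface exists, which does not happen for loops) *)
Definition loop_area (l : seq (edge d)) : nat :=
  match excluded_middle_informative (exists n, area_pred l n) with
  | left H => ex_minn H
  | right _ => 0
  end.

End Lattice.

(* The 1-chain r is additive over loop sequences.  Erasing backtracks, rotating and
   splitting leave the total chain unchanged, while a deformation by a plaquette p
   changes it by +/- r(p); and r(p) = +/- delta(q), where q is the positively oriented
   representative in P^+ of the unit square traversed by p.  Reading a vanishing
   trajectory backwards from the null sequence, whose chain is 0, and adding -/+ q at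
   each deformation therefore builds a lattice surface x with delta(x) = r(l) and
   area(x) at most the number of deformations. *)

From mathcomp Require Import all_boot all_order all_algebra.
From mathcomp Require Import zify lra.
From Stdlib Require Import ClassicalEpsilon.
Set Implicit Arguments. Unset Strict Implicit. Unset Printing Implicit Defensive.
Import Order.TTheory GRing.Theory Num.Theory.
Local Open Scope ring_scope.

Definition sg (s : bool) : int := if s then 1 else -1.

Definition step (I : eqType) (a : I) (s : bool) (k : I) : int :=
  if k == a then sg s else 0.

Lemma nonbacktracking_steps_cancel (I : eqType) (a1 a2 a3 a4 : I) (s1 s2 s3 s4 : bool) :
  (a2, s2) != (a1, ~~ s1) -> (a3, s3) != (a2, ~~ s2) ->
  (a4, s4) != (a3, ~~ s3) -> (a1, s1) != (a4, ~~ s4) ->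
  (forall k, step a1 s1 k + step a2 s2 k + step a3 s3 k + step a4 s4 k = 0) ->
  [/\ a3 = a1, s3 = ~~ s1, a4 = a2, s4 = ~~ s2 & a2 != a1].
Proof.
(* Comparing the coordinates a1 and a2 of the sum already suffices. *)
have neqF (x y : I) : x != y -> (x == y) = false /\ (y == x) = false.
  by move=> h; rewrite (negbTE h) eq_sym (negbTE h).
rewrite !xpair_eqE => N1 N2 N3 N4 H.
have := H a1; have := H a2; rewrite /step; clear H; move: N1 N2 N3 N4.
(case: (eqVneq a2 a1); [move=> -> | move=> /neqF [ha2 ha2']; rewrite ?ha2 ?ha2']);
(case: (eqVneq a3 a1); [move=> -> | move=> /neqF [ha3 ha3']; rewrite ?ha3 ?ha3']);
(case: (eqVneq a4 a1); [move=> -> | move=> /neqF [ha4 ha4']; rewrite ?ha4 ?ha4']);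
rewrite ?eqxx /=; case: s1; case: s2; case: s3; case: s4; rewrite /sg /= => //; try lia;
rewrite ?ha2 ?ha2' /=;
(case: (eqVneq a2 a4); [move=> ->; rewrite ?eqxx /= => //; lia
                       | move=> /neqF [h h']; rewrite ?h ?h' /= => //; lia]).
Qed.

Section Lattice.
Variable d : nat.
Implicit Types (e f : edge d) (u v w : vertex d) (l p : seq (edge d)).

Lemma etgtE u k s m : etgt (u, k, s) m = u m + step k s m.
Proof. by rewrite ffunE. Qed.

Lemma lex_lt_at u w (k : 'I_d) :
  (forall m : 'I_d, (m < k)%N -> u m = w m) -> u k < w k -> lex_lt u w.
Proof.
move=> eq_before lt_k; apply/existsP; exists k; rewrite lt_k andbT.
by apply/forallP=> m; apply/implyP=> /eq_before ->.
Qed.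

Lemma positiveE e : positive e = esgn e.
Proof.
case: e => [[u k] s]; rewrite /positive /esgn /esrc /=.
case: s.
  apply: (@lex_lt_at _ _ k); last by rewrite etgtE /step eqxx /sg; lia.
  by move=> m mk; rewrite etgtE /step -val_eqE ltn_eqF ?addr0.
apply/negbTE/negP=> /existsP [m /andP [/forallP eq_before]].
rewrite etgtE /step.
case: (ltngtP m k) => [mk|km|/val_inj ->].
- by rewrite -val_eqE ltn_eqF ?addr0 ?ltxx.
- by move: (eq_before k); rewrite km etgtE /step eqxx /sg => /eqP; lia.
- by rewrite eqxx /sg; lia.
Qed.

Lemma einvK : involutive (@einv d).
Proof.
case=> [[u k] s]; rewrite /einv /= negbK; congr (_, _, _).
apply/ffunP=> j; rewrite !etgtE /step.
by case: (j == k); rewrite ?addr0 //; case: s; rewrite /esrc /sg /=; lia.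
Qed.

Lemma r_edge_einv e f : r_edge (einv e) f = - r_edge e f.
Proof.
rewrite /r_edge !positiveE einvK /=.
by case: (esgn e); rewrite ?opprK.
Qed.

Lemma r_path_nil f : r_path [::] f = 0.
Proof. exact: big_nil. Qed.

Lemma r_path_cons e l f : r_path (e :: l) f = r_edge e f + r_path l f.
Proof. exact: big_cons. Qed.

Lemma r_path_cat l1 l2 f : r_path (l1 ++ l2) f = r_path l1 f + r_path l2 f.
Proof. exact: big_cat. Qed.

Lemma r_path_rcons l e f : r_path (rcons l e) f = r_path l f + r_edge e f.
Proof. by rewrite -cats1 r_path_cat r_path_cons r_path_nil addr0. Qed.

Lemma r_path_pinv l f : r_path (pinv l) f = - r_path l f.
Proof.
elim: l => [|e l IH]; first by rewrite /pinv r_path_nil oppr0.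
by rewrite /pinv /= rev_cons r_path_rcons IH r_path_cons r_edge_einv opprD addrC.
Qed.

Lemma r_path_rot k l f : r_path (rot k l) f = r_path l f.
Proof. by apply: perm_big; rewrite perm_rot. Qed.

Definition r_pathE :=
  (r_path_cat, r_path_cons, r_path_rcons, r_path_pinv, r_path_nil, r_edge_einv).

Lemma r_path_erases c c' f : erases c c' -> r_path c' f = r_path c f.
Proof.
elim=> // {}c {}c' c'' [[a [b [e [-> ->]]]] | [e [m [-> ->]]]] _ ->;
by rewrite !r_pathE; lra.
Qed.

Lemma r_path_red c m f : red c m -> r_path m f = r_path c f.
Proof. by case=> m0 [/(r_path_erases f) <- [_ [k ->]]]; rewrite r_path_rot. Qed.

Lemma r_path_oplus l p m : oplus_res l p m ->
  exists s, forall f, r_path m f = r_path l f + sg s * r_path p f.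
Proof.
case=> a [b [c [dd [e [-> [[-> red_m]|[-> red_m]]]]]]];
  [exists true | exists false] => f; rewrite (r_path_red f red_m) !r_pathE /sg; lra.
Qed.

Lemma r_path_ominus l p m : ominus_res l p m ->
  exists s, forall f, r_path m f = r_path l f + sg s * r_path p f.
Proof.
case=> a [b [c [dd [e [-> [[-> red_m]|[-> red_m]]]]]]];
  [exists false | exists true] => f; rewrite (r_path_red f red_m) !r_pathE /sg; lra.
Qed.

Lemma r_path_splitting l m1 m2 f :
  splitting l m1 m2 -> r_path l f = r_path m1 f + r_path m2 f.
Proof.
case=> a [b [c [e [[-> [red1 red2]]|[-> [red1 red2]]]]]];
by rewrite (r_path_red f red1) (r_path_red f red2) !r_pathE; lra.
Qed.

Definition vshift v (a b : 'I_d) (x y : int) : vertex d :=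
  [ffun k => v k + (if k == a then x else 0) + (if k == b then y else 0)].

Lemma vshift00 v a b : vshift v a b 0 0 = v.
Proof. by apply/ffunP=> k; rewrite !ffunE; case: (k == a); case: (k == b); rewrite !addr0. Qed.

Lemma etgt_vshift_a v a b x y s :
  etgt (vshift v a b x y, a, s) = vshift v a b (x + sg s) y.
Proof.
by apply/ffunP=> k; rewrite etgtE !ffunE /step; case: (k == a); case: (k == b); lra.
Qed.

Lemma etgt_vshift_b v a b x y s :
  etgt (vshift v a b x y, b, s) = vshift v a b x (y + sg s).
Proof.
by apply/ffunP=> k; rewrite etgtE !ffunE /step; case: (k == a); case: (k == b); lra.
Qed.

Lemma vshift_congr v a b x y x' y' :
  x = x' -> y = y' -> vshift v a b x y = vshift v a b x' y'.
Proof. by move=> -> ->. Qed.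

Lemma lex_lt_vshift v (i j : 'I_d) x y x' y' : (i < j)%N ->
  (x < x') || (x == x') && (y < y') -> lex_lt (vshift v i j x y) (vshift v i j x' y').
Proof.
move=> ij; have ji : (j == i) = false by rewrite -val_eqE gtn_eqF.
case/orP=> [xx' | /andP [/eqP <- yy']].
  apply: (@lex_lt_at _ _ i) => [m mi|]; last by rewrite !ffunE eqxx eq_sym ji; lra.
  by rewrite !ffunE -!val_eqE !ltn_eqF // (ltn_trans mi ij).
apply: (@lex_lt_at _ _ j) => [m mj|]; last by rewrite !ffunE eqxx ji; lra.
by rewrite !ffunE -!val_eqE (ltn_eqF mj); case: (m == i :> nat).
Qed.

Lemma neq_einv e f : edir f != edir e -> f != einv e.
Proof. by apply: contra_neq => ->. Qed.

(* With [i < j] the vertex [w + e_j] is lexicographically below [w + e_i], so this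
   traversal of the unit square is its representative in P^+. *)
Definition square w (i j : 'I_d) : seq (edge d) :=
  [:: (w, j, true); (etgt (w, j, true), i, true);
      (etgt (etgt (w, j, true), i, true), j, false); (etgt (w, i, true), i, false)].

Ltac vshift_normalize :=
  rewrite ?(etgt_vshift_a, etgt_vshift_b) /sg ?add0r ?addrN ?addNr.

Section Square.
Variables (w : vertex d) (i j : 'I_d).
Hypothesis ij : (i < j)%N.

Lemma square_vshift : square w i j =
  [:: (vshift w i j 0 0, j, true); (vshift w i j 0 1, i, true);
      (vshift w i j 1 1, j, false); (vshift w i j 1 0, i, false)].
Proof. by rewrite /square -{1 2 3 4}(vshift00 w i j); vshift_normalize. Qed.

Lemma square_plaquette : is_plaquette (square w i j).
Proof.
have ji : j != i by rewrite -val_eqE gtn_eqF.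
rewrite square_vshift /is_plaquette /closed_path /no_backtrack /= /adj /=.
vshift_normalize; rewrite !eqxx /=.
by rewrite !neq_einv // eq_sym.
Qed.

Lemma square_Pplus : in_Pplus (square w i j).
Proof.
split; first exact: square_plaquette.
rewrite square_vshift; do 4 eexists; split; first reflexivity.
rewrite /esrc /=; vshift_normalize.
split=> u; rewrite !inE => /or4P [] /eqP -> //; rewrite ?eqxx // => *;
  by apply: lex_lt_vshift.
Qed.

Lemma r_path_square f : r_path (square w i j) f = delta_plaq (square w i j) f.
Proof. by rewrite /delta_plaq !r_path_cons r_path_nil /r_edge !positiveE /=; lra. Qed.

End Square.

Lemma plaquette_shape p : is_plaquette p -> exists v a b s t, a != b /\
  p = [:: (vshift v a b 0 0, a, s); (vshift v a b (sg s) 0, b, t);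
          (vshift v a b (sg s) (sg t), a, ~~ s); (vshift v a b 0 (sg t), b, ~~ t)].
Proof.
case: p => [|[[u1 a1] s1] [|[[u2 a2] s2] [|[[u3 a3] s3] [|[[u4 a4] s4] [|]]]]] //.
rewrite /is_plaquette /closed_path /no_backtrack /= /adj /esrc /=.
case/and5P=> /and5P [/eqP E2 /eqP E3 /eqP E4 /eqP E1 _] N1 N2 N3 /andP [N4 _].
subst u2 u3 u4.
move: N1 N2 N3 N4; rewrite /einv /edir /= E1 !xpair_eqE !eqxx /= => N1 N2 N3 N4.
have steps0 k : step a1 s1 k + step a2 s2 k + step a3 s3 k + step a4 s4 k = 0.
  have := congr1 (fun v : vertex d => v k) E1 => /=.
  by rewrite !etgtE -!addrA -{2}[u1 k]addr0 => /addrI.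
have [->->->-> a21] :=
  nonbacktracking_steps_cancel (N1 : (a2, s2) != (a1, ~~ s1)) N2 N3 N4 steps0.
exists u1, a1, a2, s1, s2; split; first by rewrite eq_sym.
rewrite -[in X in X = _](vshift00 u1 a1 a2); vshift_normalize.
by do 3 congr (_ :: _); congr [:: (_, _, _)]; apply: vshift_congr => //; case: (s1).
Qed.

Ltac edge_seq_eq :=
  rewrite /square /pinv /einv /rot /=; vshift_normalize;
  repeat match goal with
  | |- (_ :: _) = (_ :: _) => congr (_ :: _)
  | |- (_, _, _) = (_, _, _) => congr (_, _, _)
  end;
  first [reflexivity | apply: vshift_congr; lia].

Lemma plaquette_square p : is_plaquette p -> exists w (i j : 'I_d) k, (i < j)%N /\
  (p = rot k (square w i j) \/ p = rot k (pinv (square w i j))).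
Proof.
move=> /plaquette_shape [v [a [b [s [t [ab ->]]]]]].
(* [w] is the corner of the square with the smallest coordinates. *)
case: (ltngtP a b) => [ij | ji | /val_inj eq_ab]; last by rewrite eq_ab eqxx in ab.
- case: s; case: t.
  + by exists (vshift v a b 0 0), a, b, 0%N; split=> //; right; edge_seq_eq.
  + by exists (vshift v a b 0 (-1)), a, b, 1%N; split=> //; left; edge_seq_eq.
  + by exists (vshift v a b (-1) 0), a, b, 3%N; split=> //; left; edge_seq_eq.
  + by exists (vshift v a b (-1) (-1)), a, b, 2%N; split=> //; right; edge_seq_eq.
- case: s; case: t.
  + by exists (vshift v a b 0 0), b, a, 0%N; split=> //; left; edge_seq_eq.
  + by exists (vshift v a b 0 (-1)), b, a, 1%N; split=> //; right; edge_seq_eq.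
  + by exists (vshift v a b (-1) 0), b, a, 3%N; split=> //; right; edge_seq_eq.
  + by exists (vshift v a b (-1) (-1)), b, a, 2%N; split=> //; left; edge_seq_eq.
Qed.

Lemma r_path_plaquette p : is_plaquette p ->
  exists q s, in_Pplus q /\ forall f, r_path p f = sg s * delta_plaq q f.
Proof.
move=> /plaquette_square [w [i [j [k [ij [->|->]]]]]]; exists (square w i j).
  exists true; split=> [|f]; first exact: square_Pplus.
  by rewrite r_path_rot r_path_square mul1r.
exists false; split=> [|f]; first exact: square_Pplus.
by rewrite r_path_rot r_path_pinv r_path_square mulN1r.
Qed.

Lemma r_path_deform l m : deform l m ->
  exists q s, in_Pplus q /\ forall f, r_path m f = r_path l f + sg s * delta_plaq q f.
Proof.
case=> p [/r_path_plaquette [q [s [Pq r_p]]] def_m].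
have [s' r_m] : exists s', forall f, r_path m f = r_path l f + sg s' * r_path p f.
  by case: def_m => [/r_path_oplus | /r_path_ominus].
exists q, (s == s'); split=> // f; rewrite r_m r_p mulrA.
by congr (_ + _ * _); case: (s); case: (s').
Qed.

Definition r_lseq (s : seq (seq (edge d))) f := \sum_(l <- s) r_path l f.

Lemma r_lseq_cat s1 s2 f : r_lseq (s1 ++ s2) f = r_lseq s1 f + r_lseq s2 f.
Proof. exact: big_cat. Qed.

Lemma r_lseq_cons l s f : r_lseq (l :: s) f = r_path l f + r_lseq s f.
Proof. exact: big_cons. Qed.

Lemma r_lseq_nn m f : r_lseq (nn m) f = r_path m f.
Proof.
by case: m => [|e m]; rewrite /r_lseq /= ?big_seq1 // big_nil r_path_nil.
Qed.

Definition r_lseqE := (r_lseq_cat, r_lseq_cons, r_lseq_nn).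

Lemma r_lseq_split s t f : lseq_split s t -> r_lseq t f = r_lseq s f.
Proof.
case=> s1 [s2 [l [m1 [m2 [-> [/(r_path_splitting f) r_l ->]]]]]].
by rewrite !r_lseqE r_l; lra.
Qed.

Lemma r_lseq_deform s t : lseq_deform s t ->
  exists q b, in_Pplus q /\ forall f, r_lseq t f = r_lseq s f + sg b * delta_plaq q f.
Proof.
case=> s1 [s2 [l [m [-> [/r_path_deform [q [b [Pq r_m]]] ->]]]]].
by exists q, b; split=> // f; rewrite !r_lseqE r_m; lra.
Qed.

Definition surface := seq (seq (edge d) * int).

Definition add_coef q (c : int) (pn : seq (edge d) * int) :=
  if pn.1 == q then (pn.1, pn.2 + c) else pn.

Definition add_plaquette (x : surface) q c : surface :=
  if q \in map fst x then map (add_coef q c) x else (q, c) :: x.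

Lemma delta_cons pn (x : surface) f : delta (pn :: x) f = pn.2 * delta_plaq pn.1 f + delta x f.
Proof. exact: big_cons. Qed.

Lemma surf_area_cons pn (x : surface) : surf_area (pn :: x) = (`|pn.2| + surf_area x)%N.
Proof. exact: big_cons. Qed.

Lemma map_fst_add_coef (x : surface) q c : map fst (map (add_coef q c) x) = map fst x.
Proof. by elim: x => //= pn x ->; rewrite /add_coef; case: eqP. Qed.

Lemma map_add_coef_id (x : surface) q c : q \notin map fst x -> map (add_coef q c) x = x.
Proof.
elim: x => //= pn x IH; rewrite inE negb_or => /andP [q_pn /IH ->].
by rewrite /add_coef eq_sym (negbTE q_pn).
Qed.

Section AddCoef.
Variables (x : surface) (q : seq (edge d)) (c : int).
Hypotheses (uniq_x : uniq (map fst x)) (qx : q \in map fst x).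

Lemma delta_add_coef f : delta (map (add_coef q c) x) f = delta x f + c * delta_plaq q f.
Proof.
elim: x uniq_x qx => [|pn x' IH] //= /andP [pn_x' uniq_x'].
rewrite inE !delta_cons /add_coef; case: (eqVneq pn.1 q) => [pn_q _ | _ /= q_x'].
  by rewrite map_add_coef_id -?pn_q //= pn_q; lra.
by rewrite IH // addrA.
Qed.

Lemma surf_area_add_coef : (surf_area (map (add_coef q c) x) <= surf_area x + `|c|)%N.
Proof.
elim: x uniq_x qx => [|pn x' IH] //= /andP [pn_x' uniq_x'].
rewrite inE !surf_area_cons /add_coef; case: (eqVneq pn.1 q) => [pn_q _ | _ /= q_x'].
  by rewrite map_add_coef_id -?pn_q //=; lia.
by rewrite -addnA leq_add2l IH.
Qed.

End AddCoef.

Lemma add_plaquette_wf (x : surface) q c :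
  surface_wf x -> in_Pplus q -> surface_wf (add_plaquette x q c).
Proof.
move=> [uniq_x Pplus_x] Pq; rewrite /add_plaquette; case: ifP => qx; split.
- by rewrite map_fst_add_coef.
- by move=> _ /mapP [pn /Pplus_x Ppn ->]; rewrite /add_coef; case: eqP.
- by rewrite /= qx.
- by move=> pn; rewrite inE => /predU1P [-> //|/Pplus_x].
Qed.

Lemma delta_add_plaquette (x : surface) q c f : uniq (map fst x) ->
  delta (add_plaquette x q c) f = delta x f + c * delta_plaq q f.
Proof.
rewrite /add_plaquette; case: ifP => [qx uniq_x|_ _]; first exact: delta_add_coef.
by rewrite delta_cons addrC.
Qed.

Lemma surf_area_add_plaquette (x : surface) q c : uniq (map fst x) ->
  (surf_area (add_plaquette x q c) <= surf_area x + `|c|)%N.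
Proof.
rewrite /add_plaquette; case: ifP => [qx uniq_x|_ _]; first exact: surf_area_add_coef.
by rewrite surf_area_cons addnC.
Qed.

Lemma vanishing_surface s steps : trajectory s steps -> last s (map snd steps) = [::] ->
  exists x : surface, [/\ surface_wf x, forall f, delta x f = r_lseq s f &
    (surf_area x <= num_deformations steps)%N].
Proof.
elim: steps s => [|[b t] steps IH] s /=.
  move=> _ ->; exists [::]; split=> [|f|]; first by split.
    by rewrite /delta /r_lseq !big_nil.
  by rewrite /surf_area big_nil.
case=> step_st traj_t /(IH t traj_t) [x [wf_x delta_x area_x]].
rewrite /num_deformations /=; case: b step_st => /= [|/r_lseq_split r_t].
  case/r_lseq_deform=> q [b [Pq r_t]].
  exists (add_plaquette x q (- sg b)); split.
  - exact: add_plaquette_wf.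
  - by move=> f; rewrite delta_add_plaquette ?wf_x.1 // delta_x r_t; lra.
  - apply: leq_trans (surf_area_add_plaquette _ _ wf_x.1) _.
    by rewrite abszN; case: (b); rewrite addn1 add1n ltnS.
by exists x; split=> // f; rewrite delta_x r_t.
Qed.

Lemma loop_area_le l (x : surface) : surface_wf x ->
  (forall f, delta x f = r_path l f) -> (loop_area l <= surf_area x)%N.
Proof.
move=> wf_x delta_x.
have area_x : area_pred l (surf_area x).
  by rewrite /area_pred; case: excluded_middle_informative => // -[]; exists x.
rewrite /loop_area; case: excluded_middle_informative => [ex_area|[]];
  last by exists (surf_area x).
by case: ex_minnP => n _ /(_ _ area_x).
Qed.

End Lattice.

Theorem lemma14p1 (d : nat) (hd : (2 <= d)%N) (l : seq (edge d))
  (hl : is_loop l) (hnn : l != [::])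
  (steps : seq (bool * seq (seq (edge d)))) :
  vanishing [:: l] steps -> (loop_area l <= num_deformations steps)%N.
Proof.
case=> traj vanish; have [x [wf_x delta_x area_x]] := vanishing_surface traj vanish.
apply: leq_trans area_x; apply: loop_area_le wf_x _ => f.
by rewrite delta_x r_lseq_cons /r_lseq big_nil addr0.
Qed.
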